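(* Let $d\le n$, $\beta\in\mathbb{R}^d$, $\epsilon\in\mathbb{R}^n$, $X\in\mathbb{R}^{n\times d}$, $G_n\subseteq\{1,\dots,n\}$, and $o\in\mathbb{R}^n$ with $o_i=0$ for all $i\notin G_n$; set $Y:=X\beta+\epsilon+o$. Assume there is a known $c_n\in\mathbb{N}$ with $|G_n|\le c_n$, let $a_n:=n-c_n$, and let $S_t$ be the set computed in the final iteration of Torrent run on $X,Y$ with threshold parameter $a_n$, and $\hat\beta^{n,a_n}_{\mathrm{Tor}}$ its output. For $S\subseteq\{1,\dots,n\}$ let $V(S):=(S\cup G_n^{\mathsf c})\setminus(G_n^{\mathsf c}\cap S)$, where $G_n^{\mathsf c}=\{1,\dots,n\}\setminus G_n$. Assume \[ \eta:=\max_{S\subseteq\{1,\dots,n\},\,|S|=a_n}\frac{\|X_{V(S)}\|_2}{\sqrt{\lambda_{\min}(X_S^\top X_S)}}<\frac{1}{\sqrt2}. \] Then \[ \|\hat\beta^{n,a_n}_{\mathrm{Tor}}-\beta\|_2\le\big\|(X_{S_t}^\top X_{S_t})^{-1}X_{S_t}^\top\epsilon_{S_t}\big\|_2+\frac{\sqrt2\|X_{V(S_t)}\|_2\big\|(X_{S_t}^\top X_{S_t})^{-1}X_{S_t}^\top\epsilon_{S_t}\big\|_2+\sqrt2\|\epsilon_{V(S_t)}\|_2}{\sqrt{\lambda_{\min}(X_{S_t}^\top X_{S_t})}\,(1-\sqrt2\eta)}. \]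
   Context: $\lambda_{\min}$ denotes the minimal eigenvalue and $\|\cdot\|_2$ the Euclidean norm for vectors and the spectral norm for matrices; $X_S,\epsilon_S$ denote rows/entries with indices in $S$. $\hat\beta^S_{\mathrm{OLS}}(X,Y):=(X_S^\top X_S)^{+}X_S^\top Y_S$. $\mathrm{HT}(v,a)$ is the set of indices of the $a$ smallest entries of $v$, ties broken by a fixed deterministic rule. Torrent with threshold $a$: $S_0=\{1,\dots,n\}$, $e=Y$, $\mathrm{err}=\infty$, $t=0$; while $\|e\|_2<\mathrm{err}$ (with $e$ indexed by the current set $S_t$): $t\gets t+1$, $\mathrm{err}\gets\|e\|_2$, $\hat\beta^t\gets\hat\beta^{S_{t-1}}_{\mathrm{OLS}}(X,Y)$, $v\gets|Y-X\hat\beta^t|$, $S_t\gets\mathrm{HT}(v,a)$, $e\gets|Y_{S_t}-X_{S_t}\hat\beta^t|$; output $\hat\beta^{n,a}_{\mathrm{Tor}}:=\hat\beta^t$. *)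

From HB Require Import structures.
From mathcomp Require Import all_boot all_order all_algebra.
From mathcomp Require Import all_classical all_reals.
Set Implicit Arguments.
Unset Strict Implicit.
Unset Printing Implicit Defensive.
Import Order.TTheory GRing.Theory Num.Theory.
Local Open Scope classical_set_scope.
Local Open Scope ring_scope.

Section TorrentDefs.
Variable R : realType.

Definition vnorm m (v : 'cV[R]_m) : R := Num.sqrt (\sum_i v i 0 ^+ 2).

Definition specnorm m k (A : 'M[R]_(m, k)) : R :=
  sup ((fun v : 'cV[R]_k => vnorm (A *m v)) @` [set v | vnorm v = 1]).

Definition lmin k (A : 'M[R]_k) : R := inf [set a : R | eigenvalue A a].

Definition is_mp_pinv k (A B : 'M[R]_k) : Prop :=
  [/\ A *m B *m A = A, B *m A *m B = B,
      (A *m B)^T = A *m B & (B *m A)^T = B *m A].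
Definition mp_pinv k (A : 'M[R]_k) : 'M[R]_k := xget 0 [set B | is_mp_pinv A B].

(* Row restriction to S: rows outside S are replaced by zero rows.
   X_S below is encoded as (rmask S *m X), Y_S as (rmask S *m Y). *)
Definition rmask n (S : {set 'I_n}) : 'M[R]_n :=
  diag_mx (\row_i (if i \in S then 1 else 0)).

Definition sub_rows n k (S : {set 'I_n}) (A : 'M[R]_(n, k)) : 'M[R]_(n, k) :=
  rmask S *m A.

Definition ols n d (S : {set 'I_n}) (X : 'M[R]_(n, d)) (Y : 'cV[R]_n) : 'cV[R]_d :=
  mp_pinv ((sub_rows S X)^T *m sub_rows S X) *m (sub_rows S X)^T *m sub_rows S Y.

Definition absv n (v : 'cV[R]_n) : 'cV[R]_n := map_mx (fun x => `|x|) v.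

(* ht is a hard-thresholding rule HT(., a): it returns a set of a indices of
   smallest entries (any fixed deterministic tie-breaking rule). *)
Definition is_HT n (a : nat) (ht : 'cV[R]_n -> {set 'I_n}) : Prop :=
  forall v : 'cV[R]_n, #|ht v| = a /\
    (forall i j, i \in ht v -> j \notin ht v -> v i 0 <= v j 0).

Fixpoint torrent_iter n d (ht : 'cV[R]_n -> {set 'I_n}) (X : 'M[R]_(n, d))
    (Y : 'cV[R]_n) (fuel : nat) (Sprev : {set 'I_n}) (err : R)
    : 'cV[R]_d * {set 'I_n} :=
  let b := ols Sprev X Y in
  let S := ht (absv (Y - X *m b)) in
  let en := vnorm (sub_rows S (Y - X *m b)) in
  match fuel with
  | k.+1 => if en < err then torrent_iter ht X Y k S en else (b, S)
  | 0 => (b, S)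
  end.

(* Torrent with S_0 = [n], e = Y, err = oo: the first iteration is always
   performed; afterwards the loop runs while ||e|| decreases strictly.
   Since err_t is a function of S_{t-1} and strictly decreases, at most 2^n
   continuations are possible, so the fuel 2^n.+1 is never exhausted.
   Output: (hat beta_Tor, S_t of the final iteration). *)
Definition torrent n d (ht : 'cV[R]_n -> {set 'I_n}) (X : 'M[R]_(n, d))
    (Y : 'cV[R]_n) : 'cV[R]_d * {set 'I_n} :=
  torrent_iter ht X Y (2 ^ n).+1 [set: 'I_n]%SET (vnorm Y).

Definition Vset n (G S : {set 'I_n}) : {set 'I_n} :=
  (S :|: ~: G) :\: (~: G :&: S).

Definition eta_tor n d (G : {set 'I_n}) (a : nat) (X : 'M[R]_(n, d)) : R :=
  \big[Num.max/0]_(S : {set 'I_n} | #|S| == a)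
     (specnorm (sub_rows (Vset G S) X)
       / Num.sqrt (lmin ((sub_rows S X)^T *m sub_rows S X))).

End TorrentDefs.

From HB Require Import structures.
From mathcomp Require Import all_boot all_order all_algebra.
From mathcomp Require Import all_classical all_reals.
From mathcomp Require Import complex.
From mathcomp Require Import ring lra zify.
Import Order.TTheory GRing.Theory Num.Theory.
Local Open Scope ring_scope.
Set Implicit Arguments.
Unset Strict Implicit.
Unset Printing Implicit Defensive.

(* When Torrent stops, the fit b_t (least squares on S_(t-1)) has a residual on
   S_t = HT(|Y - X b_t|) no smaller than the previous error, the residual of
   b_(t-1) on S_(t-1). Hard thresholding can only lower a residual and b_t
   minimises the residual on S_(t-1), so all these quantities agree; uniqueness
   of least squares gives b_t = b_(t-1), hence S_t = S_(t-1) and the output is the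
   least-squares estimate on S_t (a stop after the first iteration is handled by
   the same argument on all indices). The error therefore splits as w + z, where
   z = (X_S^T X_S)^-1 X_S^T o_S satisfies sqrt(lambda_min) |z| <= |o_S| by the
   Rayleigh quotient bound.
   As S_t holds the a_n smallest residuals r = Y - X bhat, each outlier kept in
   S_t has a residual no larger than those of the at least as many inliers left
   out, where r = -g with g = X (bhat - beta) - eps. Thus
   |o_S| <= sqrt 2 |g_V| <= sqrt 2 (||X_V|| |bhat - beta| + |eps_V|), and the
   bound follows by solving |bhat - beta| <= |w| + |z| for |bhat - beta|,
   using ||X_V|| / sqrt(lambda_min) <= eta < 1 / sqrt 2. *)

Section DotProduct.
Variable R : realDomainType.

Definition dotv m (u v : 'cV[R]_m) : R := \sum_i u i 0 * v i 0.

Lemma dotvE m (u v : 'cV[R]_m) : (u^T *m v) 0 0 = dotv u v.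
Proof. by rewrite mxE; apply: eq_bigr => i _; rewrite mxE. Qed.

Lemma dotvC m (u v : 'cV[R]_m) : dotv u v = dotv v u.
Proof. by apply: eq_bigr => i _; rewrite mulrC. Qed.

Lemma dotvDl m (u v w : 'cV[R]_m) : dotv (u + v) w = dotv u w + dotv v w.
Proof. by rewrite /dotv -big_split; apply: eq_bigr => i _; rewrite mxE mulrDl. Qed.

Lemma dotvZl m a (u w : 'cV[R]_m) : dotv (a *: u) w = a * dotv u w.
Proof. by rewrite /dotv mulr_sumr; apply: eq_bigr => i _; rewrite mxE mulrA. Qed.

Lemma dotvNl m (u w : 'cV[R]_m) : dotv (- u) w = - dotv u w.
Proof. by rewrite -scaleN1r dotvZl mulN1r. Qed.

Lemma dotv0r m (u : 'cV[R]_m) : dotv u 0 = 0.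
Proof. by rewrite /dotv big1 // => i _; rewrite mxE mulr0. Qed.

Lemma dotvvE m (u : 'cV[R]_m) : dotv u u = \sum_i u i 0 ^+ 2.
Proof. by apply: eq_bigr => i _; rewrite expr2. Qed.

Lemma dotvv_ge0 m (u : 'cV[R]_m) : 0 <= dotv u u.
Proof. by rewrite dotvvE; apply: sumr_ge0 => i _; rewrite sqr_ge0. Qed.

Lemma dotvv_eq0 m (u : 'cV[R]_m) : dotv u u = 0 -> u = 0.
Proof.
rewrite dotvvE => /eqP; rewrite psumr_eq0 => [/allP h|i _]; last exact: sqr_ge0.
apply/matrixP => i j; rewrite ord1 mxE.
by apply/eqP; rewrite -sqrf_eq0; apply: h; rewrite mem_index_enum.
Qed.

Lemma dotv_CauchySchwarz m (u v : 'cV[R]_m) :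
  dotv u v ^+ 2 <= dotv u u * dotv v v.
Proof.
set a := dotv u u; set b := dotv u v; set c := dotv v v.
have [a0|a_neq0] := eqVneq a 0.
  by rewrite /b (dotvv_eq0 a0) dotvC dotv0r a0 expr0n mul0r.
have a_gt0 : 0 < a by rewrite lt_def a_neq0 dotvv_ge0.
have := dotvv_ge0 (b *: u - a *: v).
rewrite !(dotvDl, dotvNl, dotvZl) [dotv u _]dotvC [dotv v _]dotvC.
rewrite !(dotvDl, dotvNl, dotvZl) -/a -/c (dotvC v u) -/b.
have -> : b * (b * a - a * b) - a * (b * b - a * c) = a * (a * c - b ^+ 2).
  by rewrite expr2; ring.
by rewrite pmulr_rge0 // subr_ge0 mulrC.
Qed.

End DotProduct.

Section EuclideanNorm.
Variable R : realType.

Lemma vnormE m (u : 'cV[R]_m) : vnorm u = Num.sqrt (dotv u u).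
Proof. by rewrite /vnorm dotvvE. Qed.

Lemma vnorm_ge0 m (u : 'cV[R]_m) : 0 <= vnorm u.
Proof. by rewrite vnormE sqrtr_ge0. Qed.

Lemma vnorm_sqr m (u : 'cV[R]_m) : vnorm u ^+ 2 = dotv u u.
Proof. by rewrite vnormE sqr_sqrtr // dotvv_ge0. Qed.

Lemma vnorm0 m : vnorm (0 : 'cV[R]_m) = 0.
Proof. by rewrite vnormE dotv0r sqrtr0. Qed.

Lemma vnorm_eq0 m (u : 'cV[R]_m) : vnorm u = 0 -> u = 0.
Proof. by move=> h; apply: dotvv_eq0; rewrite -vnorm_sqr h expr0n. Qed.

Lemma vnormZ m a (u : 'cV[R]_m) : vnorm (a *: u) = `|a| * vnorm u.
Proof.
rewrite !vnormE dotvZl dotvC dotvZl mulrA -expr2 sqrtrM ?sqr_ge0 //.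
by rewrite sqrtr_sqr.
Qed.

Lemma vnormN m (u : 'cV[R]_m) : vnorm (- u) = vnorm u.
Proof. by rewrite -scaleN1r vnormZ normrN1 mul1r. Qed.

Lemma ler_vnorm m p (u : 'cV[R]_m) (v : 'cV[R]_p) t : 0 <= t ->
  (vnorm u <= t * vnorm v) = (dotv u u <= t ^+ 2 * dotv v v).
Proof.
move=> t_ge0; rewrite -(ler_pXn2r (_ : 0 < 2)%N) ?nnegrE ?mulr_ge0 ?vnorm_ge0 //.
by rewrite exprMn !vnorm_sqr.
Qed.

Lemma ler_dotv_vnorm m (u v : 'cV[R]_m) : `|dotv u v| <= vnorm u * vnorm v.
Proof.
rewrite -(ler_pXn2r (_ : 0 < 2)%N) ?nnegrE ?mulr_ge0 ?vnorm_ge0 //.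
by rewrite real_normK ?num_real // exprMn !vnorm_sqr dotv_CauchySchwarz.
Qed.

Lemma ler_vnormD m (u v : 'cV[R]_m) : vnorm (u + v) <= vnorm u + vnorm v.
Proof.
rewrite -(ler_pXn2r (_ : 0 < 2)%N) ?nnegrE ?addr_ge0 ?vnorm_ge0 //.
rewrite vnorm_sqr sqrrD !vnorm_sqr dotvDl !(dotvC _ (u + v)) !dotvDl (dotvC v u).
have := le_trans (ler_norm (dotv u v)) (ler_dotv_vnorm u v).
rewrite mulr2n; lra.
Qed.

End EuclideanNorm.

Section SpectralNorm.
Local Open Scope classical_set_scope.
Variable R : realType.

Lemma dotv_mulmx_le m k (A : 'M[R]_(m, k)) (u : 'cV[R]_k) :
  dotv (A *m u) (A *m u) <= (\sum_i dotv (row i A)^T (row i A)^T) * dotv u u.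
Proof.
rewrite dotvvE mulr_suml; apply: ler_sum => i _.
have -> : (A *m u) i 0 = dotv (row i A)^T u.
  by rewrite mxE; apply: eq_bigr => j _; rewrite !mxE.
exact: dotv_CauchySchwarz.
Qed.

Lemma specnorm_ge0 m k (A : 'M[R]_(m, k)) : 0 <= specnorm A.
Proof.
rewrite /specnorm; set E := (fun v => _) @` _.
have [[y Ey]|E0] := pselect (exists y, E y); last first.
  by rewrite (_ : E = set0) ?sup0 //; apply/seteqP; split=> x // Ex; apply: E0; exists x.
have [supE|] := pselect (has_sup E); last by move/sup_out->.
by apply: le_trans (ub_le_sup supE.2 Ey); case: Ey => v _ <-; exact: vnorm_ge0.
Qed.

Lemma specnormP m k (A : 'M[R]_(m, k)) (v : 'cV[R]_k) :
  vnorm (A *m v) <= specnorm A * vnorm v.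
Proof.
have [->|v_neq0] := eqVneq v 0; first by rewrite mulmx0 !vnorm0 mulr0.
have v_gt0 : 0 < vnorm v.
  by rewrite lt_def vnorm_ge0 andbT; apply: contra_neq v_neq0; exact: vnorm_eq0.
set u := (vnorm v)^-1 *: v.
have u1 : vnorm u = 1 by rewrite vnormZ ger0_norm ?invr_ge0 ?vnorm_ge0 // mulVf // gt_eqF.
have ubE : has_ubound ((fun w => vnorm (A *m w)) @` [set w | vnorm w = 1]).
  exists (Num.sqrt (\sum_i dotv (row i A)^T (row i A)^T)) => _ [w w1 <-].
  rewrite vnormE ler_sqrt; last by apply: sumr_ge0 => i _; exact: dotvv_ge0.
  by have := dotv_mulmx_le A w; rewrite -[dotv w w]vnorm_sqr w1 expr1n mulr1.
have := ub_le_sup ubE (ex_intro2 _ _ u u1 erefl).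
rewrite -/(specnorm A) -scalemxAr vnormZ ger0_norm ?invr_ge0 ?vnorm_ge0 //.
by rewrite mulrC -ler_pdivrMr // invf_div => h; rewrite -ler_pdivrMr // mulrC.
Qed.

End SpectralNorm.

Section RowRestriction.
Variable R : realType.

Lemma sub_rowsE n k (S : {set 'I_n}) (A : 'M[R]_(n, k)) i j :
  sub_rows S A i j = (i \in S)%:R * A i j.
Proof. by rewrite /sub_rows /rmask mul_diag_mx !mxE; case: (i \in S). Qed.

Lemma sub_rowsT n k (A : 'M[R]_(n, k)) : sub_rows [set: 'I_n]%SET A = A.
Proof. by apply/matrixP => i j; rewrite sub_rowsE inE mul1r. Qed.

Lemma sub_rowsM n k p (S : {set 'I_n}) (A : 'M[R]_(n, k)) (B : 'M[R]_(k, p)) :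
  sub_rows S (A *m B) = sub_rows S A *m B.
Proof. by rewrite /sub_rows mulmxA. Qed.

Lemma sub_rowsD n k (S : {set 'I_n}) (A B : 'M[R]_(n, k)) :
  sub_rows S (A + B) = sub_rows S A + sub_rows S B.
Proof. by rewrite /sub_rows mulmxDr. Qed.

Lemma sub_rowsB n k (S : {set 'I_n}) (A B : 'M[R]_(n, k)) :
  sub_rows S (A - B) = sub_rows S A - sub_rows S B.
Proof. by rewrite /sub_rows mulmxBr. Qed.

Lemma sub_rows_id n k (S : {set 'I_n}) (A : 'M[R]_(n, k)) :
  sub_rows S (sub_rows S A) = sub_rows S A.
Proof. by apply/matrixP => i j; rewrite !sub_rowsE mulrA -natrM mulnb andbb. Qed.

Lemma trmx_sub_rowsM n k p (S : {set 'I_n}) (A : 'M[R]_(n, k)) (B : 'M[R]_(n, p)) :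
  (sub_rows S A)^T *m sub_rows S B = A^T *m sub_rows S B.
Proof.
rewrite /sub_rows trmx_mul /rmask tr_diag_mx -mulmxA.
by rewrite -[diag_mx _ *m (diag_mx _ *m B)]/(sub_rows S (sub_rows S B)) sub_rows_id.
Qed.

Lemma dotv_sub_rows n (S : {set 'I_n}) (v : 'cV[R]_n) :
  dotv (sub_rows S v) (sub_rows S v) = \sum_(i in S) v i 0 ^+ 2.
Proof.
rewrite dotvvE [RHS]big_mkcond; apply: eq_bigr => i _; rewrite sub_rowsE.
by case: (i \in S); rewrite ?mul1r ?mul0r ?expr0n.
Qed.

Lemma sub_rows_vnorm_ge n (S : {set 'I_n}) (v : 'cV[R]_n) :
  vnorm v <= vnorm (sub_rows S v) -> sub_rows S v = v.
Proof.
rewrite !vnormE ler_sqrt ?dotvv_ge0 // dotv_sub_rows dotvvE (bigID (mem S)) /=.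
rewrite gerDl => out_le0.
have out0 : \sum_(i | i \notin S) v i 0 ^+ 2 = 0.
  by apply/eqP; rewrite eq_le out_le0 sumr_ge0 // => i _; exact: sqr_ge0.
apply/matrixP => i j; rewrite ord1 sub_rowsE.
have [_|Si] := boolP (i \in S); first by rewrite mul1r.
apply/esym/eqP; rewrite mul0r -sqrf_eq0; apply/eqP.
by apply: (psumr_eq0P _ out0) => // l _; exact: sqr_ge0.
Qed.

End RowRestriction.

Section HermitianSpectrum.
Variable C : numClosedFieldType.
Local Open Scope sesquilinear_scope.

Lemma eigenvalue_spectral_diag k (A : 'M[C]_k) j :
  A \is normalmx -> eigenvalue A (spectral_diag A 0 j).
Proof.
move=> /orthomx_spectralP; set P := spectralmx A; set D := spectral_diag A => defA.
have P_unit : P \in unitmx := spectral_unit A.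
apply/eigenvalueP; exists (delta_mx 0 j *m P).
  rewrite {1}defA !mulmxA mulmxK //.
  have -> : delta_mx (0 : 'I_1) j *m diag_mx D = D 0 j *: delta_mx 0 j.
    apply/matrixP => i l; rewrite mul_mx_diag !mxE.
    by case: (eqVneq l j) => [->|]; rewrite ?andbT ?andbF ?mul0r ?mulr0 // mulrC.
  by rewrite scalemxAl.
rewrite mulmx_free_eq0 ?row_free_unit //.
by apply/eqP => /matrixP /(_ 0 j); rewrite !mxE !eqxx => /eqP; rewrite oner_eq0.
Qed.

Lemma hermitian_form_ge k (A : 'M[C]_k) j : A \is hermsymmx ->
  (forall i, spectral_diag A 0 j <= spectral_diag A 0 i) ->
  forall u : 'rV_k, spectral_diag A 0 j * (u *m u^t*) 0 0 <= (u *m A *m u^t*) 0 0.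
Proof.
move=> /hermitian_normalmx /orthomx_spectralP.
set P := spectralmx A; set D := spectral_diag A => defA Dj_min u.
have P_unitary : P \is unitarymx := spectral_unitarymx A.
set y := u *m P^t*.
have -> : u *m A *m u^t* = y *m diag_mx D *m y^t*.
  by rewrite {1}defA invmx_unitary // /y trmx_mul map_mxM trmxCK !mulmxA.
have -> : u *m u^t* = y *m y^t* by rewrite /y trmx_mul map_mxM trmxCK mulmxA mulmxKtV.
rewrite !mxE mulr_sumr; apply: ler_sum => i _.
rewrite mul_mx_diag !mxE mulrAC [X in X <= _]mulrC.
by apply: ler_wpM2l; [exact: mul_conjC_ge0 | exact: Dj_min].
Qed.

End HermitianSpectrum.

Section RealSymmetric.
Variable R : rcfType.
Local Notation toC := (real_complex R).
Local Open Scope sesquilinear_scope.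

Lemma sym_map_hermsym k (A : 'M[R]_k) : A^T = A -> map_mx toC A \is hermsymmx.
Proof.
move=> symA; apply: realsym_hermsym.
  by apply/is_hermitianmxP; rewrite expr0 scale1r map_mx_id // map_trmx symA.
by apply/mxOverP => i j; rewrite mxE complex_real.
Qed.

(* The spectral theorem of MathComp is stated over a numClosedFieldType, hence
   the detour through R[i]. *)
Lemma sym_rayleigh k (A : 'M[R]_k.+1) : A^T = A ->
  exists2 mu, eigenvalue A mu & forall v, mu * dotv v v <= dotv v (A *m v).
Proof.
move=> /sym_map_hermsym hermAC; set AC := map_mx toC A in hermAC.
set D := spectral_diag AC.
have D_real j : D 0 j = toC (complex.Re (D 0 j)).
  by rewrite RRe_real //; exact: mxOverP (hermitian_spectral_diag_real hermAC) 0 j.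
pose j0 := [arg min_(j < ord0) complex.Re (D 0 j)]%O.
have Dj0_min i : D 0 j0 <= D 0 i.
  rewrite D_real [D 0 i]D_real lecR /j0.
  by case: arg_minP => // l _; apply.
exists (complex.Re (D 0 j0)).
  have := eigenvalue_spectral_diag j0 (hermitian_normalmx hermAC).
  by rewrite -/D D_real eigenvalue_map.
move=> v; have := hermitian_form_ge hermAC Dj0_min (map_mx toC v^T).
have -> : (map_mx toC v^T)^t* = map_mx toC v.
  by apply/matrixP => i j; rewrite !mxE conj_Creal // complex_real.
rewrite -[dotv v v]dotvE -[dotv v (A *m v)]dotvE mulmxA.
by rewrite /AC -!map_mxM ![map_mx _ _ 0 0]mxE D_real -rmorphM lecR.
Qed.

End RealSymmetric.

Notation gram B := (B^T *m B).

Section Gram.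
Variable R : realType.

Lemma lmin_rayleigh k (A : 'M[R]_k) : A^T = A ->
  forall v, lmin A * dotv v v <= dotv v (A *m v).
Proof.
case: k A => [A _ v|k A symA]; first by rewrite /dotv !big_ord0 mulr0.
have [mu eig_mu mu_le] := sym_rayleigh symA.
suff -> : lmin A = mu by [].
have mu_lb a : eigenvalue A a -> mu <= a.
  move=> /eigenvalueP [x xA x_neq0].
  have Ax : A *m x^T = a *: x^T by rewrite -symA -trmx_mul xA linearZ.
  have x_gt0 : 0 < dotv x^T x^T.
    rewrite lt_def dotvv_ge0 andbT; apply: contra_neq x_neq0.
    by move/dotvv_eq0/(congr1 trmx); rewrite trmxK trmx0.
  by have := mu_le x^T; rewrite Ax dotvC dotvZl ler_pM2r.
apply/le_anti/andP; split.
  by apply: ge_inf eig_mu; exists mu.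
by apply: lb_le_inf; [exists mu | exact: mu_lb].
Qed.

Lemma gram_sym m k (B : 'M[R]_(m, k)) : (gram B)^T = gram B.
Proof. by rewrite trmx_mul trmxK. Qed.

Lemma dotv_gram m k (B : 'M[R]_(m, k)) v : dotv v (gram B *m v) = dotv (B *m v) (B *m v).
Proof. by rewrite -!dotvE trmx_mul !mulmxA. Qed.

Lemma lmin_gram_inj m k (B : 'M[R]_(m, k)) : 0 < lmin (gram B) ->
  forall v : 'cV_k, B *m v = 0 -> v = 0.
Proof.
move=> lmin_gt0 v Bv0; apply: dotvv_eq0; apply/eqP.
have := lmin_rayleigh (gram_sym B) v.
rewrite dotv_gram Bv0 dotv0r pmulr_rle0 // => v_le0.
by rewrite eq_le v_le0 dotvv_ge0.
Qed.

Lemma unitmx_gram m k (B : 'M[R]_(m, k)) :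
  (forall v : 'cV_k, B *m v = 0 -> v = 0) -> gram B \in unitmx.
Proof.
move=> injB; rewrite unitmxE unitfE; apply/negP => /det0P [u u_neq0 uG].
have Gu : gram B *m u^T = 0 by rewrite -(gram_sym B) -trmx_mul uG trmx0.
have Bu : B *m u^T = 0 by apply: dotvv_eq0; rewrite -dotv_gram Gu dotv0r.
by move: u_neq0; rewrite -[u]trmxK (injB _ Bu) trmx0 eqxx.
Qed.

Lemma lmin_gram_le m k (B : 'M[R]_(m, k)) (v : 'cV_k) (u : 'cV_m) :
  gram B *m v = B^T *m u -> lmin (gram B) * dotv v v <= dotv u u.
Proof.
move=> normal_eq; apply: le_trans (lmin_rayleigh (gram_sym B) v) _.
rewrite dotv_gram; set q := dotv (B *m v) (B *m v).
have q_le : q ^+ 2 <= q * dotv u u.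
  have -> : q ^+ 2 = dotv (B *m v) u ^+ 2.
    by rewrite /q -dotv_gram normal_eq -!dotvE trmx_mul mulmxA.
  by apply: le_trans (dotv_CauchySchwarz _ _) _.
have [->|q_neq0] := eqVneq q 0; first exact: dotvv_ge0.
have q_gt0 : 0 < q by rewrite lt_def q_neq0 dotvv_ge0.
by rewrite -(ler_pM2l q_gt0) -expr2.
Qed.

Lemma vnorm_gram_solve_le m k (B : 'M[R]_(m, k)) (u : 'cV[R]_m) :
  0 < lmin (gram B) ->
  Num.sqrt (lmin (gram B)) * vnorm (invmx (gram B) *m B^T *m u) <= vnorm u.
Proof.
move=> lmin_gt0; rewrite -[vnorm u]mul1r -(ger0_norm (sqrtr_ge0 _)) -vnormZ.
rewrite ler_vnorm // expr1n mul1r dotvZl dotvC dotvZl mulrA -expr2.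
rewrite sqr_sqrtr ?(ltW lmin_gt0) //; apply: lmin_gram_le.
rewrite -[invmx _ *m _ *m u]mulmxA mulKVmx //.
by apply: unitmx_gram => v; apply: lmin_gram_inj.
Qed.

End Gram.

Section LeastSquares.
Variables (R : realType) (n d : nat) (X : 'M[R]_(n, d)) (Y : 'cV[R]_n).

Lemma mp_pinv_unit k (A : 'M[R]_k) : A \in unitmx -> mp_pinv A = invmx A.
Proof.
move=> A_unit; have : exists B, is_mp_pinv A B.
  by exists (invmx A); split; rewrite ?mulmxV ?mulVmx ?mul1mx ?trmx1.
move=> /(xgetPex 0) [+ _ _ _]; rewrite -/(mp_pinv A).
move=> /(congr1 (fun M => invmx A *m M *m invmx A)).
by rewrite /= !mulmxA mulVmx // !mul1mx mulmxK.
Qed.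

Lemma olsE T : gram (sub_rows T X) \in unitmx ->
  ols T X Y = invmx (gram (sub_rows T X)) *m (sub_rows T X)^T *m sub_rows T Y.
Proof. by move=> G_unit; rewrite /ols mp_pinv_unit. Qed.

Lemma ols_normal_eq T : gram (sub_rows T X) \in unitmx ->
  (sub_rows T X)^T *m sub_rows T (Y - X *m ols T X Y) = 0.
Proof.
move=> G_unit; rewrite sub_rowsB sub_rowsM olsE // mulmxBr.
by rewrite [M in _ - M]mulmxA -[invmx _ *m _ *m _]mulmxA mulKVmx // subrr.
Qed.

Lemma ols_pythagoras T c : gram (sub_rows T X) \in unitmx ->
  let r := sub_rows T (Y - X *m ols T X Y) in
  let s := sub_rows T X *m (ols T X Y - c) in
  dotv (sub_rows T (Y - X *m c)) (sub_rows T (Y - X *m c)) = dotv r r + dotv s s.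
Proof.
move=> G_unit r s.
have -> : sub_rows T (Y - X *m c) = r + s.
  by rewrite /r /s !sub_rowsB !sub_rowsM mulmxBr addrA subrK.
have rs0 : dotv r s = 0.
  rewrite -dotvE /s mulmxA -[sub_rows T X]trmxK -trmx_mul ols_normal_eq //.
  by rewrite trmx0 mul0mx mxE.
by rewrite !(dotvDl, dotvC _ (r + s)) (dotvC s r) rs0 addr0 add0r.
Qed.

Lemma ols_unique T c : gram (sub_rows T X) \in unitmx ->
  vnorm (sub_rows T (Y - X *m c)) <= vnorm (sub_rows T (Y - X *m ols T X Y)) ->
  ols T X Y = c.
Proof.
move=> G_unit; rewrite !vnormE ler_sqrt ?dotvv_ge0 // ols_pythagoras //.
set s := sub_rows T X *m _; rewrite gerDl => s_le0.
have s0 : s = 0 by apply: dotvv_eq0; apply/eqP; rewrite eq_le s_le0 dotvv_ge0.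
apply/eqP; rewrite -subr_eq0; apply/eqP.
by rewrite -(mulKmx G_unit (_ - c)) -mulmxA -/s s0 !mulmx0.
Qed.

End LeastSquares.

Lemma ols_modelE (R : realType) n d (T : {set 'I_n}) (X : 'M[R]_(n, d)) beta e :
  gram (sub_rows T X) \in unitmx ->
  ols T X (X *m beta + e) - beta =
    invmx (gram (sub_rows T X)) *m (sub_rows T X)^T *m sub_rows T e.
Proof.
move=> G_unit; rewrite olsE // sub_rowsD sub_rowsM !mulmxDr.
rewrite [_ *m (_ *m beta)]mulmxA -[_ *m _ *m sub_rows T X]mulmxA mulVmx //.
by rewrite mul1mx addrAC subrr add0r.
Qed.

Lemma ler_sum_setcard (R : realDomainType) (I : finType) (F : I -> R) (P Q : {set I}) :
  (#|P| <= #|Q|)%N -> (forall i j, i \in P -> j \in Q -> F i <= F j) ->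
  (forall i, 0 <= F i) -> \sum_(i in P) F i <= \sum_(i in Q) F i.
Proof.
move=> PQ FPQ F_ge0; have [Q0|Q_gt0] := posnP #|Q|.
  by move: PQ; rewrite Q0 leqn0 cards_eq0 => /eqP->; rewrite big_set0; exact: sumr_ge0.
rewrite -(ler_pMn2r Q_gt0) -sumrMnl.
apply: (@le_trans _ _ ((\sum_(j in Q) F j) *+ #|P|)).
  rewrite -[_ *+ #|P|]sumr_const; apply: ler_sum => i Pi.
  by rewrite -[_ *+ #|Q|]sumr_const; apply: ler_sum => j Qj; exact: FPQ.
by apply: ler_wpMn2l => //; exact: sumr_ge0.
Qed.

Section HardThreshold.
Variables (R : realType) (n a : nat) (ht : 'cV[R]_n -> {set 'I_n}).
Hypothesis htP : is_HT a ht.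

Lemma card_ht v : #|ht v| = a.
Proof. by have [] := htP v. Qed.

Lemma ht_sqr_le (r : 'cV[R]_n) i j : i \in ht (absv r) -> j \notin ht (absv r) ->
  r i 0 ^+ 2 <= r j 0 ^+ 2.
Proof.
move=> Si Sj; have [_ ht_le] := htP (absv r); have := ht_le i j Si Sj.
rewrite !mxE -[r i 0 ^+ 2]real_normK ?num_real // -[r j 0 ^+ 2]real_normK ?num_real //.
by move=> le_ij; rewrite ler_pXn2r ?nnegrE.
Qed.

Lemma vnorm_ht_le (r : 'cV[R]_n) (T : {set 'I_n}) : (a <= #|T|)%N ->
  vnorm (sub_rows (ht (absv r)) r) <= vnorm (sub_rows T r).
Proof.
move=> aT; set S := ht (absv r).
rewrite !vnormE ler_sqrt ?dotvv_ge0 // !dotv_sub_rows.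
rewrite (big_setID T) [X in _ <= X](big_setID S) /= finset.setIC lerD2l.
apply: ler_sum_setcard => [|i j|i]; last exact: sqr_ge0.
  by rewrite !cardsD finset.setIC card_ht; apply: leq_sub2r.
by rewrite !inE => /andP[_ Si] /andP[Tj _]; apply: ht_sqr_le.
Qed.

End HardThreshold.

Section Torrent.
Variables (R : realType) (n d a : nat) (X : 'M[R]_(n, d)) (Y : 'cV[R]_n).
Variable ht : 'cV[R]_n -> {set 'I_n}.
Hypothesis htP : is_HT a ht.
Hypothesis lmin_gt0 :
  forall S : {set 'I_n}, #|S| = a -> 0 < lmin (gram (sub_rows S X)).

Let unit_gram (S : {set 'I_n}) : #|S| = a -> gram (sub_rows S X) \in unitmx.
Proof. by move=> Sa; apply/unitmx_gram/lmin_gram_inj/lmin_gt0. Qed.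

Definition next_set (T : {set 'I_n}) := ht (absv (Y - X *m ols T X Y)).
Definition next_err (T : {set 'I_n}) :=
  vnorm (sub_rows (next_set T) (Y - X *m ols T X Y)).

Lemma torrent_iterS k (T : {set 'I_n}) err : torrent_iter ht X Y k.+1 T err =
  if next_err T < err then torrent_iter ht X Y k (next_set T) (next_err T)
  else (ols T X Y, next_set T).
Proof. by []. Qed.

Definition reachable (T : {set 'I_n}) err :=
  (T = [set: 'I_n]%SET /\ err = vnorm Y) \/
  exists Q, T = next_set Q /\ err = next_err Q.

(* The error strictly decreases along a run, so the sets Q with next_err Q < err
   bound its length. *)
Lemma torrent_iter_stop k (T : {set 'I_n}) err : reachable T err ->
  (#|[set Q | (next_err Q < err)%R]| < k)%N ->
  exists T' err', [/\ reachable T' err', err' <= next_err T' &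
    torrent_iter ht X Y k T err = (ols T' X Y, next_set T')].
Proof.
elim: k T err => [//|k IHk] T err reachT; rewrite ltnS torrent_iterS => card_lt.
case: ltP => [lt_err|]; last by exists T, err.
apply: IHk; first by right; exists T.
apply: leq_trans card_lt; apply: proper_card; apply/properP; split.
  by apply/fintype.subsetP => Q; rewrite !inE => /lt_trans; apply.
by exists T; rewrite !inE ?lt_err ?ltxx.
Qed.

Lemma X_inj (v : 'cV[R]_d) : X *m v = 0 -> v = 0.
Proof.
move=> Xv0; apply: (lmin_gram_inj (lmin_gt0 (card_ht htP 0))).
by rewrite -sub_rowsM Xv0 /sub_rows mulmx0.
Qed.

Lemma ols_next_set_first : vnorm Y <= next_err [set: 'I_n]%SET ->
  ols (next_set [set: 'I_n]%SET) X Y = ols [set: 'I_n]%SET X Y.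
Proof.
set S := next_set _; set b := ols [set: 'I_n]%SET X Y => Y_le.
have G_unit : gram (sub_rows [set: 'I_n]%SET X) \in unitmx.
  by rewrite sub_rowsT; exact: unitmx_gram X_inj.
have b0 : b = 0.
  apply: ols_unique => //; rewrite mulmx0 subr0 sub_rowsT.
  apply: le_trans Y_le (vnorm_ht_le htP _ _).
  by rewrite cardsT -(card_ht htP 0) max_card.
have YS : sub_rows S Y = Y.
  by apply: sub_rows_vnorm_ge; move: Y_le; rewrite /next_err -/b b0 mulmx0 subr0.
have XtY : X^T *m Y = 0.
  by have := ols_normal_eq Y G_unit; rewrite -/b b0 mulmx0 subr0 !sub_rowsT.
rewrite b0 olsE; last exact/unit_gram/(card_ht htP).
by rewrite -mulmxA (trmx_sub_rowsM S X Y) YS XtY mulmx0.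
Qed.

Lemma next_set_fixed (Q : {set 'I_n}) : next_err Q <= next_err (next_set Q) ->
  next_set (next_set Q) = next_set Q.
Proof.
set T := next_set Q => err_le.
suff ols_TQ : ols T X Y = ols Q X Y by rewrite /next_set ols_TQ.
apply: ols_unique; first exact/unit_gram/(card_ht htP).
apply: le_trans err_le (vnorm_ht_le htP _ _).
by rewrite (card_ht htP).
Qed.

Lemma torrent_spec : [/\ #|(torrent ht X Y).2| = a,
  (torrent ht X Y).1 = ols (torrent ht X Y).2 X Y &
  (torrent ht X Y).2 = ht (absv (Y - X *m (torrent ht X Y).1))].
Proof.
have card_lt : (#|[set Q | (next_err Q < vnorm Y)%R]| < (2 ^ n).+1)%N.
  rewrite ltnS -[n in (_ <= 2 ^ n)%N]card_ord -cardsT -card_powerset.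
  by apply/subset_leq_card/fintype.subsetP => Q _; rewrite powersetE finset.subsetT.
have [T [err [reachT err_le run]]] :=
  torrent_iter_stop (or_introl (conj erefl erefl)) card_lt.
rewrite /torrent run /=; split=> //; first exact: card_ht htP _.
case: reachT err_le => [[-> ->]|[Q [-> ->]]]; first by move=> /ols_next_set_first ->.
by move=> /next_set_fixed ->.
Qed.

End Torrent.

Lemma card_inlier_outlier n (G S : {set 'I_n}) :
  (#|G| + #|S| <= n)%N -> (#|S :&: G| <= #|~: G :\: S|)%N.
Proof.
have := cardsID G S; have := cardsID S (~: G); have := cardsC G.
rewrite card_ord finset.setIC -finset.setDE; lia.
Qed.

Lemma outlier_bound (R : realType) n a (ht : 'cV[R]_n -> {set 'I_n})
    (G S : {set 'I_n}) (r g o : 'cV[R]_n) :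
  is_HT a ht -> S = ht (absv r) -> (#|G| + a <= n)%N ->
  o = r + g -> (forall i, i \notin G -> o i 0 = 0) ->
  vnorm (sub_rows S o) <= Num.sqrt 2 * vnorm (sub_rows (Vset G S) g).
Proof.
move=> htP defS card_le def_o o_out.
rewrite ler_vnorm ?sqrtr_ge0 // sqr_sqrtr // !dotv_sub_rows.
have o_in : \sum_(i in S) o i 0 ^+ 2 = \sum_(i in S :&: G) o i 0 ^+ 2.
  rewrite (big_setID G) /= [X in _ + X]big1 ?addr0 // => i.
  by rewrite !inE => /andP[/o_out -> _]; rewrite expr0n.
have r_le : \sum_(i in S :&: G) r i 0 ^+ 2 <= \sum_(i in ~: G :\: S) r i 0 ^+ 2.
  apply: ler_sum_setcard => [|i j|i]; last exact: sqr_ge0.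
    by apply: card_inlier_outlier; rewrite defS (card_ht htP).
  by rewrite !inE defS => /andP[Si _] /andP[Sj _]; apply: ht_sqr_le.
have r_out : \sum_(i in ~: G :\: S) r i 0 ^+ 2 = \sum_(i in ~: G :\: S) g i 0 ^+ 2.
  apply: eq_bigr => i; rewrite !inE => /andP[_ Gi].
  have := o_out i Gi; rewrite def_o mxE => /eqP; rewrite addr_eq0 => /eqP->.
  by rewrite sqrrN.
have g_V : \sum_(i in Vset G S) g i 0 ^+ 2 =
    \sum_(i in S :&: G) g i 0 ^+ 2 + \sum_(i in ~: G :\: S) g i 0 ^+ 2.
  rewrite (big_setID S) /=; congr (_ + _); apply: eq_bigl => i;
    by rewrite /Vset !inE; case: (i \in S); case: (i \in G).
have o_le : \sum_(i in S :&: G) o i 0 ^+ 2 <=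
    2 * \sum_(i in S :&: G) r i 0 ^+ 2 + 2 * \sum_(i in S :&: G) g i 0 ^+ 2.
  rewrite !mulr_sumr -big_split /=; apply: ler_sum => i _; rewrite def_o mxE.
  have := sqr_ge0 (r i 0 - g i 0); rewrite !sqrrD sqrrN mulrN !mulr2n; lra.
rewrite o_in g_V; lra.
Qed.

Lemma eta_tor_ge (R : realType) n d (G S : {set 'I_n}) a (X : 'M[R]_(n, d)) :
  #|S| = a ->
  specnorm (sub_rows (Vset G S) X) / Num.sqrt (lmin (gram (sub_rows S X)))
    <= eta_tor G a X.
Proof.
move=> Sa; rewrite /eta_tor.
by apply: (le_bigmax_cond _ (fun S0 : {set 'I_n} => _)); rewrite Sa.
Qed.

Lemma le_solve_self_bound (R : realFieldType) (D W Z N E s t e : R) :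
  0 <= W -> 0 <= Z -> 0 <= N -> 0 <= E -> 0 < s -> 0 < t ->
  D <= W + Z -> s * Z <= t * (N * D + E) -> N / s <= e -> t * e < 1 ->
  D <= W + (t * N * W + t * E) / (s * (1 - t * e)).
Proof.
move=> W0 Z0 N0 E0 s_gt0 t_gt0 DWZ sZ Ns te1.
have N_le : N <= e * s by rewrite -ler_pdivrMr.
have den_gt0 : 0 < s * (1 - t * e) by rewrite mulr_gt0 // subr_gt0.
have p1 : t * Z * N <= t * Z * (e * s) by rewrite ler_wpM2l // mulr_ge0 // ltW.
have p2 : t * N * D <= t * N * (W + Z) by rewrite ler_wpM2l // mulr_ge0 // ltW.
suff : Z <= (t * N * W + t * E) / (s * (1 - t * e)) by lra.
rewrite ler_pdivlMr //; nra.
Qed.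

Theorem theorem3p3 (R : realType) (n d : nat) (hdn : (d <= n)%N)
  (X : 'M[R]_(n, d)) (beta : 'cV[R]_d) (eps : 'cV[R]_n)
  (G : {set 'I_n}) (o : 'cV[R]_n)
  (ho : forall i, i \notin G -> o i 0 = 0)
  (c : nat) (hc : (#|G| <= c)%N)
  (ht : 'cV[R]_n -> {set 'I_n}) (hht : is_HT (n - c)%N ht)
  (hpos : forall S : {set 'I_n}, #|S| = (n - c)%N ->
            0 < lmin ((sub_rows S X)^T *m sub_rows S X))
  (heta : eta_tor G (n - c)%N X < 1 / Num.sqrt 2) :
  let Y := X *m beta + eps + o in
  let bhat := (torrent ht X Y).1 in
  let St := (torrent ht X Y).2 in
  let XS := sub_rows St X in
  let w := invmx (XS^T *m XS) *m XS^T *m sub_rows St eps in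
  vnorm (bhat - beta) <=
    vnorm w +
    (Num.sqrt 2 * specnorm (sub_rows (Vset G St) X) * vnorm w
       + Num.sqrt 2 * vnorm (sub_rows (Vset G St) eps))
    / (Num.sqrt (lmin (XS^T *m XS)) * (1 - Num.sqrt 2 * eta_tor G (n - c)%N X)).
Proof.
cbv zeta; set Y := X *m beta + eps + o.
set bhat := (torrent ht X Y).1; set St := (torrent ht X Y).2.
set XS := sub_rows St X; set w := invmx (gram XS) *m XS^T *m sub_rows St eps.
have [St_card bhatE StE] := torrent_spec Y hht hpos; rewrite -/bhat -/St in bhatE StE.
have lmin_gt0 := hpos _ St_card.
set z := invmx (gram XS) *m XS^T *m sub_rows St o.
have err_split : bhat - beta = w + z.
  rewrite bhatE /Y -addrA ols_modelE ?sub_rowsD ?mulmxDr //.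
  exact/unitmx_gram/lmin_gram_inj.
set V := Vset G St; set g := X *m (bhat - beta) - eps.
have o_le : vnorm (sub_rows St o) <= Num.sqrt 2 * vnorm (sub_rows V g).
  apply: outlier_bound hht StE _ _ ho.
    have := subset_leq_card (finset.subsetT G); rewrite cardsT card_ord; lia.
  by apply/matrixP => i j; rewrite /Y /g mulmxBr !mxE; ring.
have g_le : vnorm (sub_rows V g) <=
    specnorm (sub_rows V X) * vnorm (bhat - beta) + vnorm (sub_rows V eps).
  rewrite sub_rowsB sub_rowsM; apply: le_trans (ler_vnormD _ _) _.
  by rewrite vnormN lerD2r specnormP.
apply: (le_solve_self_bound (Z := vnorm z));
  rewrite ?vnorm_ge0 ?specnorm_ge0 ?sqrtr_gt0 //.
- by rewrite err_split ler_vnormD.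
- apply: le_trans (vnorm_gram_solve_le _ lmin_gt0) _.
  by apply: le_trans o_le _; rewrite ler_wpM2l ?sqrtr_ge0.
- exact: eta_tor_ge.
- by rewrite ltr_pdivlMr ?sqrtr_gt0 // mulrC in heta.
Qed.
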